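(* Let $n\ge 4$. For every extreme point $\bar x$ of $P^n$ with all coordinates in $\{0,\tfrac12,1\}$ there exist $y^1,y^2\in\mathcal C^n$ such that $\bar x=\tfrac12 y^1+\tfrac12 y^2$.
   Context: Let $V=\{0,\dots,n-1\}$ and $E=\{(u,v)\in V\times V:u\neq v\}$ be the arc set of the complete digraph, with arcs written $uv$. For $w\in V$ let $\delta^+(w)$ and $\delta^-(w)$ denote the sets of arcs leaving and entering $w$. For $S\subseteq V$ let $\delta^+(S)=\{uv\in E:u\in S,\ v\notin S\}$, and let $\mathcal S=\{S\subset V:2\le|S|\le n-2\}$. For $x\in\mathbb R^E$ and $F\subseteq E$ write $x(F)=\sum_{e\in F}x_e$. The asymmetric subtour elimination polytope is $$P^n=\{x\in\mathbb R^E:\ x(\delta^+(w))=1 \text{ and } x(\delta^-(w))=1\ \forall w\in V,\ \ x(\delta^+(S))\ge 1\ \forall S\in\mathcal S,\ \ x\ge 0\}.$$ Let $\mathcal C^n=\{y\in\{0,1\}^E:\ y(\delta^+(w))=y(\delta^-(w))=1\ \forall w\in V\}$. These are the characteristic vectors of cycle covers, i.e. of spanning collections of vertex-disjoint directed cycles, each of length at least $2$, covering $V$. *)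

From HB Require Import structures.
From mathcomp Require Import all_boot all_order all_algebra.
From mathcomp Require Import reals.
Set Implicit Arguments. Unset Strict Implicit. Unset Printing Implicit Defensive.
Import Order.TTheory GRing.Theory Num.Theory.
Local Open Scope ring_scope.

Definition darc (n : nat) := {e : 'I_n * 'I_n | e.1 != e.2}.

Section Defs.
Variables (R : realType) (n : nat).

Definition tail (e : darc n) : 'I_n := (val e).1.
Definition head (e : darc n) : 'I_n := (val e).2.

Definition xsum (x : darc n -> R) (F : {set darc n}) : R := \sum_(e in F) x e.

Definition delta_out (w : 'I_n) : {set darc n} := [set e | tail e == w].
Definition delta_in (w : 'I_n) : {set darc n} := [set e | head e == w].
Definition delta_outS (S : {set 'I_n}) : {set darc n} :=
  [set e | (tail e \in S) && (head e \notin S)].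

Definition in_ASEP (x : darc n -> R) : Prop :=
  (forall w : 'I_n, xsum x (delta_out w) = 1 /\ xsum x (delta_in w) = 1) /\
  (forall S : {set 'I_n}, (2 <= #|S|)%N -> (#|S| <= n - 2)%N ->
      1 <= xsum x (delta_outS S)) /\
  (forall e, 0 <= x e).

Definition extreme_ASEP (x : darc n -> R) : Prop :=
  in_ASEP x /\
  forall (y z : darc n -> R) (lam : R), in_ASEP y -> in_ASEP z ->
    0 < lam -> lam < 1 -> (forall e, x e = lam * y e + (1 - lam) * z e) ->
    forall e, y e = z e.

Definition in_Cn (y : darc n -> R) : Prop :=
  (forall e, y e = 0 \/ y e = 1) /\
  (forall w : 'I_n, xsum y (delta_out w) = 1 /\ xsum y (delta_in w) = 1).

End Defs.

From Pilot Require Import Defs.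
From HB Require Import structures.
From mathcomp Require Import all_boot all_order all_algebra.
From mathcomp Require Import reals zify.
Set Implicit Arguments. Unset Strict Implicit. Unset Printing Implicit Defensive.
Import Order.TTheory GRing.Theory Num.Theory.

(* Since x is half-integral, 2x is a
   nat matrix M with zero diagonal whose row and column sums all equal 2, i.e. a
   2-regular bipartite multigraph between tails and heads.  Every bipartite
   multigraph with even degrees has a submultigraph P taking exactly half of each
   degree: by induction on the number of edges, either remove a double edge, or
   contract a path a' - b - a - b' to a single edge a' - b', halve the smaller
   multigraph, and expand the edge back into a' - b and a - b' on the side that
   contains it.  Then P and M - P have all degrees 1 and zero diagonal, so they
   are cycle covers, and x = P/2 + (M - P)/2. *)

Section Halving.
Variable T : finType.
Implicit Types (M N P : T -> T -> nat) (a b i j : T).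

Definition rowsum M i := \sum_j M i j.
Definition transp M i j := M j i.
Definition colsum M j := rowsum (transp M) j.
Definition total M := \sum_i rowsum M i.
Definition unit_at a b i j : nat := (i == a) && (j == b).

Lemma rowsumD M N i : rowsum (fun i j => M i j + N i j) i = rowsum M i + rowsum N i.
Proof. exact: big_split. Qed.

Lemma colsumD M N j : colsum (fun i j => M i j + N i j) j = colsum M j + colsum N j.
Proof. exact: rowsumD. Qed.

Lemma eq_rowsum M N : (forall i j, M i j = N i j) -> rowsum M =1 rowsum N.
Proof. by move=> eqMN i; apply: eq_bigr => j _. Qed.

Lemma eq_colsum M N : (forall i j, M i j = N i j) -> colsum M =1 colsum N.
Proof. by move=> eqMN; apply: eq_rowsum => i j; apply: eqMN. Qed.

Lemma rowsum_unit_at a b i : rowsum (unit_at a b) i = (i == a).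
Proof.
rewrite /rowsum (bigD1 b) // /= big1 => [|j /negbTE nbj]; last by rewrite /unit_at nbj andbF.
by rewrite /unit_at eqxx andbT addn0.
Qed.

Lemma colsum_unit_at a b j : colsum (unit_at a b) j = (j == b).
Proof.
by rewrite /colsum -(rowsum_unit_at b a); apply: eq_rowsum => i k; rewrite /transp /unit_at andbC.
Qed.

Lemma totalD M N : total (fun i j => M i j + N i j) = total M + total N.
Proof. by rewrite /total -big_split; apply: eq_bigr => i _; apply: rowsumD. Qed.

Lemma eq_total M N : (forall i j, M i j = N i j) -> total M = total N.
Proof. by move=> eqMN; apply: eq_bigr => i _; apply: eq_rowsum. Qed.

Lemma total_unit_at a b : total (unit_at a b) = 1.
Proof.
rewrite /total (eq_bigr _ (fun i _ => rowsum_unit_at a b i)).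
by rewrite (bigD1 a) //= eqxx big1 // => i /negbTE ->.
Qed.

Lemma leq_rowsum M i j : M i j <= rowsum M i.
Proof. by rewrite /rowsum (bigD1 j) //= leq_addr. Qed.

Lemma leq_colsum M i j : M i j <= colsum M j.
Proof. exact: (leq_rowsum (transp M)). Qed.

Lemma rowsum_gt_entry M a b : M a b < rowsum M a -> exists2 b', b' != b & 0 < M a b'.
Proof.
move=> ltMab; apply/exists_inP; apply: contraLR ltMab => /exists_inPn M0.
rewrite -leqNgt /rowsum (bigD1 b) //= big1 ?addn0 // => j /M0.
by rewrite lt0n negbK => /eqP.
Qed.

Lemma colsum_gt_entry M a b : M a b < colsum M b -> exists2 a', a' != a & 0 < M a' b.
Proof. by move/(rowsum_gt_entry (M := transp M)). Qed.

Lemma unit_at_le M a b i j : 0 < M a b -> unit_at a b i j <= M i j.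
Proof. by rewrite /unit_at; case: (i =P a) => [->|]; case: (j =P b) => [->|]. Qed.

Lemma rowsum_add_unit M N a b :
  (forall i j, M i j + unit_at a b i j = N i j) -> forall i, rowsum M i + (i == a) = rowsum N i.
Proof. by move=> eqMN i; rewrite -(rowsum_unit_at a b) -rowsumD; apply: eq_rowsum. Qed.

Lemma colsum_add_unit M N a b :
  (forall i j, M i j + unit_at a b i j = N i j) -> forall j, colsum M j + (j == b) = colsum N j.
Proof. by move=> eqMN j; rewrite -(colsum_unit_at a b) -colsumD; apply: eq_colsum. Qed.

Definition halves M P := [/\ forall i j, P i j <= M i j,
  forall i, rowsum M i = (rowsum P i).*2 & forall j, colsum M j = (colsum P j).*2].

Lemma halves_complement M P : halves M P -> halves M (fun i j => M i j - P i j).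
Proof.
move=> [leP rowP colP]; have subK i j : M i j - P i j + P i j = M i j by rewrite subnK.
split=> [i j|i|j]; first exact: leq_subr.
- by have := rowP i; rewrite -(eq_rowsum subK) rowsumD; lia.
- by have := colP j; rewrite -(eq_colsum subK) colsumD; lia.
Qed.

Section Double.
Variables (M M' : T -> T -> nat) (a b : T).
Hypothesis defM : forall i j, M i j = M' i j + unit_at a b i j + unit_at a b i j.

Lemma rowsum_double i : rowsum M i = rowsum M' i + (i == a) + (i == a).
Proof. by rewrite (eq_rowsum defM) !rowsumD rowsum_unit_at. Qed.

Lemma colsum_double j : colsum M j = colsum M' j + (j == b) + (j == b).
Proof. by rewrite (eq_colsum defM) !colsumD colsum_unit_at. Qed.

Lemma total_double : total M = total M' + 2.
Proof. by rewrite (eq_total defM) !totalD total_unit_at -addnA. Qed.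

Lemma halves_double P' : halves M' P' -> halves M (fun i j => P' i j + unit_at a b i j).
Proof.
case=> leP' rowP' colP'; split=> [i j|i|j].
- by rewrite defM; have := leP' i j; lia.
- by rewrite rowsum_double rowsumD rowsum_unit_at rowP'; lia.
- by rewrite colsum_double colsumD colsum_unit_at colP'; lia.
Qed.

End Double.

Lemma contract_path M a b a' b' : a' != a -> b' != b ->
  0 < M a b -> 0 < M a b' -> 0 < M a' b ->
  exists M', forall i j,
    M i j + unit_at a' b' i j = M' i j + unit_at a b i j + unit_at a b' i j + unit_at a' b i j.
Proof.
move=> na'a nb'b Mab Mab' Ma'b; have naa' : a != a' by rewrite eq_sym.
have nbb' : b != b' by rewrite eq_sym.
exists (fun i j =>
  M i j + unit_at a' b' i j - unit_at a b i j - unit_at a b' i j - unit_at a' b i j).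
move=> i j; rewrite /unit_at.
have [->|_] := eqVneq i a; have [->|_] := eqVneq j b;
  rewrite ?eqxx ?(negbTE naa') ?(negbTE nbb') /=;
  try (have [->|_] := eqVneq i a'); try (have [->|_] := eqVneq j b'); rewrite /=; lia.
Qed.

Section Contraction.
Variables (M M' : T -> T -> nat) (a b a' b' : T).
Hypotheses (na'a : a' != a) (nb'b : b' != b).
Hypothesis defM : forall i j,
  M i j + unit_at a' b' i j = M' i j + unit_at a b i j + unit_at a b' i j + unit_at a' b i j.

Lemma rowsum_contraction i :
  rowsum M i + (i == a') = rowsum M' i + (i == a) + (i == a) + (i == a').
Proof. by rewrite (rowsum_add_unit defM) !rowsumD !rowsum_unit_at. Qed.

Lemma colsum_contraction j :
  colsum M j + (j == b') = colsum M' j + (j == b) + (j == b') + (j == b).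
Proof. by rewrite (colsum_add_unit defM) !colsumD !colsum_unit_at. Qed.

Lemma total_contraction : total M + 1 = total M' + 3.
Proof.
by rewrite -[in LHS](total_unit_at a' b') -totalD (eq_total defM) !totalD !total_unit_at -!addnA.
Qed.

Lemma halves_contraction P' : halves M' P' -> exists P, halves M P.
Proof.
move=> halvesP'.
have M'pos : 0 < M' a' b'.
  have := defM a' b'; rewrite /unit_at !eqxx (negbTE na'a) (negbTE nb'b) /=; lia.
(* Up to complementation, the edge [a' - b'] lies in the half [Q]. *)
have [Q [leQ rowQ colQ] Qpos] : exists2 Q, halves M' Q & 0 < Q a' b'.
  have [P'0|] := posnP (P' a' b'); last by exists P'.
  by exists (fun i j => M' i j - P' i j); [exact: halves_complement | rewrite P'0 subn0].
pose P i j := Q i j - unit_at a' b' i j + unit_at a' b i j + unit_at a b' i j.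
have defP i j : P i j + unit_at a' b' i j = Q i j + unit_at a' b i j + unit_at a b' i j.
  by have := unit_at_le i j Qpos; rewrite /P; lia.
exists P; split=> [i j|i|j].
- by have := defP i j; have := defM i j; have := leQ i j; lia.
- have := rowsum_add_unit defP i; rewrite !rowsumD !rowsum_unit_at.
  by have := rowsum_contraction i; rewrite rowQ; lia.
- have := colsum_add_unit defP j; rewrite !colsumD !colsum_unit_at.
  by have := colsum_contraction j; rewrite colQ; lia.
Qed.

End Contraction.

Theorem halves_even_degrees M :
  (forall i, ~~ odd (rowsum M i)) -> (forall j, ~~ odd (colsum M j)) -> exists P, halves M P.
Proof.
have [N] := ubnP (total M); elim: N M => // N IH M ltMN evenRow evenCol.
have [[a b] /= Mab|M0] := pickP (fun p : T * T => 0 < M p.1 p.2); last first.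
  have M0' i j : M i j = 0 by have /= := M0 (i, j); lia.
  by exists (fun _ _ => 0); split=> // k; rewrite /colsum /rowsum !big1 // => i _; apply: M0'.
have [Mab2|Mab1] := leqP 2 (M a b).
  pose M' i j := M i j - unit_at a b i j - unit_at a b i j.
  have defM i j : M i j = M' i j + unit_at a b i j + unit_at a b i j.
    by rewrite /M' /unit_at; case: (i =P a) => [->|_]; case: (j =P b) => [->|_] /=; lia.
  have [|i|j|P' halvesP'] := IH M'.
  - by have := total_double defM; lia.
  - by have := evenRow i; rewrite (rowsum_double defM); lia.
  - by have := evenCol j; rewrite (colsum_double defM); lia.
  by exists (fun i j => P' i j + unit_at a b i j); apply: halves_double.
have [b' nb'b Mab'] : exists2 b', b' != b & 0 < M a b'.
  by apply: rowsum_gt_entry; have := evenRow a; have := leq_rowsum M a b; lia.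
have [a' na'a Ma'b] : exists2 a', a' != a & 0 < M a' b.
  by apply: colsum_gt_entry; have := evenCol b; have := leq_colsum M a b; lia.
have [M' defM] := contract_path na'a nb'b Mab Mab' Ma'b.
have [|i|j|P' halvesP'] := IH M'.
- by have := total_contraction defM; lia.
- by have := evenRow i; have := rowsum_contraction defM i; lia.
- by have := evenCol j; have := colsum_contraction defM j; lia.
exact: (halves_contraction na'a nb'b defM halvesP').
Qed.

End Halving.

(* Restore the arc [tail]/[head] of Defs, shadowed by those of seq. *)
Import Pilot.Defs.
Local Open Scope ring_scope.

Section CycleCovers.
Variables (R : realType) (n : nat).
Implicit Types (M P : 'I_n -> 'I_n -> nat) (w : 'I_n).

Definition arc_vec P (e : darc n) : R := (P (tail e) (head e))%:R.

Lemma sum_darc (Q : pred ('I_n * 'I_n)) (F : 'I_n * 'I_n -> R) :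
  \sum_(e : darc n | Q (val e)) F (val e) = \sum_(p | (p.1 != p.2) && Q p) F p.
Proof.
rewrite (reindex_omap (val : darc n -> _) insub) => [|p /andP[p12 _]]; last by rewrite insubT.
by apply: eq_bigl => e; rewrite valK eqxx andbT (valP e).
Qed.

Lemma xsum_delta_out P w : (forall i, P i i = 0%N) ->
  xsum (arc_vec P) (delta_out w) = (rowsum P w)%:R.
Proof.
move=> P0; rewrite /xsum /rowsum natr_sum (bigD1 w) //= P0 add0r.
rewrite (eq_bigl (fun e : darc n => (val e).1 == w)) => [|e]; last by rewrite inE.
rewrite (sum_darc (fun p => p.1 == w) (fun p => (P p.1 p.2)%:R)).
have -> : \sum_(j | j != w) (P w j)%:R = \sum_(i | i == w) \sum_(j | j != i) (P i j)%:R :> R.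
  by rewrite big_pred1_eq.
rewrite pair_big_dep.
by apply: eq_bigl => -[i j] /=; rewrite andbC; case: (i =P w) => [->|] //=; rewrite eq_sym.
Qed.

Lemma xsum_delta_in P w : (forall i, P i i = 0%N) ->
  xsum (arc_vec P) (delta_in w) = (colsum P w)%:R.
Proof.
move=> P0; rewrite /xsum /colsum /rowsum /transp natr_sum (bigD1 w) //= P0 add0r.
rewrite (eq_bigl (fun e : darc n => (val e).2 == w)) => [|e]; last by rewrite inE.
rewrite (sum_darc (fun p => p.2 == w) (fun p => (P p.1 p.2)%:R)).
rewrite (eq_bigr (fun i => \sum_(j | j == w) (P i j)%:R)) => [|i _]; last by rewrite big_pred1_eq.
rewrite pair_big_dep; apply: eq_bigl => -[i j] /=.
by case: (j =P w) => [->|]; rewrite ?andbF // andbT.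
Qed.

Lemma in_Cn_halves M P :
  (forall i, M i i = 0%N) -> (forall w, rowsum M w = 2%N /\ colsum M w = 2%N) ->
  halves M P -> in_Cn (arc_vec P).
Proof.
move=> M0 degM [leP rowP colP].
have P0 i : P i i = 0%N by apply/eqP; rewrite -leqn0 -(M0 i) leP.
have rowP1 w : rowsum P w = 1%N by have := rowP w; rewrite (proj1 (degM w)); lia.
have colP1 w : colsum P w = 1%N by have := colP w; rewrite (proj2 (degM w)); lia.
split=> [e|w]; last by rewrite xsum_delta_out // xsum_delta_in // rowP1 colP1.
have := leq_rowsum P (tail e) (head e); rewrite rowP1 /arc_vec.
by case: (P _ _) => [|[|]] // _; [left|right].
Qed.

End CycleCovers.

Lemma natr_half_eq1 (R : realType) (k : nat) : k%:R / 2 = 1 :> R -> k = 2%N.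
Proof.
move/(canRL (divfK _)); rewrite mul1r pnatr_eq0 => /(_ isT).
by move/eqP; rewrite eqr_nat => /eqP.
Qed.

Theorem mainTheorem2 (R : realType) (n : nat) (x : darc n -> R) :
  (4 <= n)%N ->
  extreme_ASEP x ->
  (forall e, x e = 0 \/ x e = 2^-1 \/ x e = 1) ->
  exists y1 y2 : darc n -> R,
    in_Cn y1 /\ in_Cn y2 /\ forall e, x e = 2^-1 * y1 e + 2^-1 * y2 e.
Proof.
move=> _ [[degx _] _] valx.
have twice_x_nat e : 2 * x e \is a Num.nat.
  by case: (valx e) => [->|[->|->]]; rewrite ?mulr0 ?mulr1 ?mulfV ?pnatr_eq0 ?natr_nat.
pose M i j := oapp (fun e => Num.truncn (2 * x e)) 0%N (insub (i, j)).
have M0 i : M i i = 0%N by rewrite /M insubF //= eqxx.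
have xM e : x e = arc_vec R M e / 2.
  rewrite /arc_vec /M (_ : (tail e, head e) = val e); last by case: e => -[].
  by rewrite valK /= truncnK // mulrC mulKf // pnatr_eq0.
have xsumM F : xsum x F = xsum (arc_vec R M) F / 2.
  by rewrite /xsum mulr_suml; apply: eq_bigr => e _.
have degM w : rowsum M w = 2%N /\ colsum M w = 2%N.
  have [] := degx w; rewrite !xsumM xsum_delta_out // xsum_delta_in //.
  by move=> /natr_half_eq1 -> /natr_half_eq1 ->.
have [P halvesP] : exists P, halves M P.
  by apply: halves_even_degrees => w; rewrite (proj1 (degM w), proj2 (degM w)).
have halvesQ := halves_complement halvesP.
exists (arc_vec R P), (arc_vec R (fun i j => M i j - P i j)%N).
split; [exact: in_Cn_halves halvesP | split; [exact: in_Cn_halves halvesQ|]].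
move=> e; have [leP _ _] := halvesP.
by rewrite xM /arc_vec -{1}(subnK (leP (tail e) (head e))) natrD mulrDl addrC !(mulrC _ 2^-1).
Qed.
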